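(* For any finite set of atomic recipes $\{R_1,\ldots,R_n\}$, the set $\mathsf{Compose}(\{R_1,\ldots,R_n\})$ is finite.
   Context: Fix disjoint finite sets $\mathcal C$ (comestible nodes) and $\mathcal A$ (action nodes). A type hierarchy is an acyclic directed graph with a unique maximal node; $t_1\preceq t_2$ means $t_1$ is a subtype of or equal to $t_2$, and $t_1\simeq t_2$ means $t_1\preceq t_2$ or $t_2\preceq t_1$. A recipe graph is $(C,A,E)$ with: (1) $\emptyset\subset C\subseteq\mathcal C$, $\emptyset\subset A\subseteq\mathcal A$; (2) $E\subseteq (C\times A)\cup(A\times C)$; (3) $(C\cup A,E)$ is a connected acyclic directed graph; (4) every action node has at least one incoming and one outgoing arc; (5) every comestible node has at most one incoming arc. A recipe is $(C,A,E,F)$ with $(C,A,E)$ a recipe graph and $F$ assigning a comestible type to each node of $C$ and an action type to each node of $A$ such that $F(n)\simeq F(n')$ for $n,n'\in C$ implies $n=n'$. A recipe is atomic if it has exactly one action node. For a recipe $R$: $\mathsf{Acts}(R)$, $\mathsf{Coms}(R)$ are its action and comestible nodes; $\mathsf{In}(R)$ (resp. $\mathsf{Out}(R)$) the comestible nodes with no incoming (resp. outgoing) arc; $\mathsf{Mid}(R)$ the comestible nodes with both. Composition of recipes $R_1=(C_1,A_1,E_1,F_1)$, $R_2=(C_2,A_2,E_2,F_2)$: if (1) $\mathsf{Out}(R_1)\cap\mathsf{In}(R_2)\neq\emptyset$; (2) $\mathsf{Mid}(R_1)\cap\mathsf{Mid}(R_2)=\emptyset$; (3) $\mathsf{Acts}(R_1)\cap\mathsf{Acts}(R_2)=\emptyset$;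 (4) $\mathsf{Out}(R_2)\cap\mathsf{In}(R_1)=\emptyset$; (5) $F_1(n)=F_2(n)$ for all $n\in\mathsf{Out}(R_1)\cap\mathsf{In}(R_2)$; (6) $F_1(n)\not\simeq F_2(n')$ for all $n\in\mathsf{Coms}(R_1)\setminus\mathsf{Out}(R_1)$, $n'\in\mathsf{Coms}(R_2)\setminus\mathsf{In}(R_2)$, then $R_1\oplus R_2=(C_1\cup C_2,A_1\cup A_2,E_1\cup E_2,F_1\cup F_2)$, otherwise $R_1\oplus R_2=\bot$ (failure). For a set of recipes $\{R_1,\ldots,R_n\}$, $\mathsf{Compose}(\{R_1,\ldots,R_n\})$ is the closure of $\{R_1,\ldots,R_n\}$ under $\oplus$: it contains each $R_i$, and whenever $R,R'$ belong to it and $R\oplus R'\neq\bot$, $R\oplus R'$ belongs to it. *)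

From mathcomp Require Import all_boot finmap.
From Stdlib Require Import Relations.
From Stdlib Require List.

Set Implicit Arguments.
Unset Strict Implicit.
Unset Printing Implicit Defensive.

Local Open Scope fset_scope.

(* A type hierarchy on a type of types [T] is given by its arc relation
   [sub]: [sub t1 t2] is an arc from t1 to t2 (t1 is a direct subtype of t2).
   t1 ⪯ t2 is the reflexive-transitive closure. *)
Definition tle (T : Type) (sub : T -> T -> Prop) : T -> T -> Prop :=
  clos_refl_trans T sub.

Definition tcomp (T : Type) (sub : T -> T -> Prop) (t1 t2 : T) : Prop :=
  tle sub t1 t2 \/ tle sub t2 t1.

Definition maximal_node (T : Type) (sub : T -> T -> Prop) (m : T) : Prop :=
  forall t, tle sub m t -> t = m.

Definition type_hierarchy (T : Type) (sub : T -> T -> Prop) : Prop :=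
  (forall t, ~ clos_trans T sub t t) /\
  exists m, maximal_node sub m /\ forall m', maximal_node sub m' -> m' = m.

(* Comestible nodes [Cn] and action nodes [An] are finite types; being
   distinct summands of [Cn + An], they are disjoint.  The typing [F] is
   represented by its graph: a finite set of (node, type) pairs, so that
   F1 ∪ F2 is literally the union of graphs. *)
Record recipe (Cn An : finType) (CT AT : choiceType) := Recipe {
  coms  : {set Cn};
  acts  : {set An};
  arcs  : {set (Cn + An) * (Cn + An)};
  typC  : {fset Cn * CT};
  typA  : {fset An * AT}
}.

Section RecipeDefs.
Variables (Cn An : finType) (CT AT : choiceType).
Implicit Types R : recipe Cn An CT AT.

Definition node_in R (x : Cn + An) : bool :=
  match x with inl c => c \in coms R | inr a => a \in acts R end.

Definition arc_ok R (e : (Cn + An) * (Cn + An)) : bool :=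
  match e with
  | (inl c, inr a) => (c \in coms R) && (a \in acts R)
  | (inr a, inl c) => (a \in acts R) && (c \in coms R)
  | _ => false
  end.

Definition arcrel R : rel (Cn + An) := fun x y => (x, y) \in arcs R.
Definition uarcrel R : rel (Cn + An) :=
  fun x y => ((x, y) \in arcs R) || ((y, x) \in arcs R).

Definition is_recipe_graph R : Prop :=
  coms R != set0 /\ acts R != set0 /\
      (forall e, e \in arcs R -> arc_ok R e) /\
      (forall x y, node_in R x -> node_in R y -> connect (uarcrel R) x y) /\
      (forall x y, arcrel R x y -> ~~ connect (arcrel R) y x) /\
      (forall a, a \in acts R ->
          (exists x, (x, inr a) \in arcs R) /\ (exists y, (inr a, y) \in arcs R)) /\
      (forall c, c \in coms R -> #|[set x | (x, inl c) \in arcs R]| <= 1)%N.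

Definition is_recipe (subC : CT -> CT -> Prop) R : Prop :=
  is_recipe_graph R /\
      (forall c, c \in coms R <-> exists t, (c, t) \in typC R) /\
      (forall c t1 t2, (c, t1) \in typC R -> (c, t2) \in typC R -> t1 = t2) /\
      (forall a, a \in acts R <-> exists t, (a, t) \in typA R) /\
      (forall a t1 t2, (a, t1) \in typA R -> (a, t2) \in typA R -> t1 = t2) /\
      (forall n n' t t', (n, t) \in typC R -> (n', t') \in typC R ->
          tcomp subC t t' -> n = n').

Definition atomic R : Prop := #|acts R| = 1.

Definition has_in R (c : Cn) : bool := [exists x, (x, inl c) \in arcs R].
Definition has_out R (c : Cn) : bool := [exists y, (inl c, y) \in arcs R].

Definition In_ R : {set Cn} := [set c in coms R | ~~ has_in R c].
Definition Out_ R : {set Cn} := [set c in coms R | ~~ has_out R c].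
Definition Mid_ R : {set Cn} := [set c in coms R | has_in R c && has_out R c].

(* conditions (1)-(6) for R1 ⊕ R2 ≠ ⊥ *)
Definition composable (subC : CT -> CT -> Prop) R1 R2 : Prop :=
  Out_ R1 :&: In_ R2 != set0 /\
      Mid_ R1 :&: Mid_ R2 = set0 /\
      acts R1 :&: acts R2 = set0 /\
      Out_ R2 :&: In_ R1 = set0 /\
      (forall n t1 t2, n \in Out_ R1 :&: In_ R2 ->
          (n, t1) \in typC R1 -> (n, t2) \in typC R2 -> t1 = t2) /\
      (forall n n' t t', n \in coms R1 :\: Out_ R1 -> n' \in coms R2 :\: In_ R2 ->
          (n, t) \in typC R1 -> (n', t') \in typC R2 -> ~ tcomp subC t t').

Definition runion R1 R2 : recipe Cn An CT AT :=
  Recipe (coms R1 :|: coms R2) (acts R1 :|: acts R2) (arcs R1 :|: arcs R2)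
         (typC R1 `|` typC R2) (typA R1 `|` typA R2).

Inductive InCompose (subC : CT -> CT -> Prop) (Rs : seq (recipe Cn An CT AT))
  : recipe Cn An CT AT -> Prop :=
| IC_base R : List.In R Rs -> InCompose subC Rs R
| IC_comp R1 R2 : InCompose subC Rs R1 -> InCompose subC Rs R2 ->
    composable subC R1 R2 -> InCompose subC Rs (runion R1 R2).

End RecipeDefs.

From mathcomp Require Import all_boot finmap.
From Stdlib Require List.

Set Implicit Arguments.
Unset Strict Implicit.
Unset Printing Implicit Defensive.

(* Every recipe obtained by composition is the componentwise union of some
   of the given recipes, so Compose({R_1, ..., R_n}) has at most 2^n
   elements. *)

Section UnionOverSubfamily.
Variables (Cn An : finType) (CT AT : choiceType) (I : finType).
Variable F : I -> recipe Cn An CT AT.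

Definition runion_over (A : {set I}) : recipe Cn An CT AT :=
  Recipe (\bigcup_(i in A) coms (F i))
         (\bigcup_(i in A) acts (F i))
         (\bigcup_(i in A) arcs (F i))
         (\big[@fsetU _/fset0]_(i in A) typC (F i))
         (\big[@fsetU _/fset0]_(i in A) typA (F i)).

Lemma runion_overU (A B : {set I}) :
  runion (runion_over A) (runion_over B) = runion_over (A :|: B).
Proof.
by congr Recipe; rewrite big_setU // => X; first [exact: setUid | exact: fsetUid].
Qed.

Lemma runion_over1 (i : I) : runion_over [set i] = F i.
Proof. by rewrite /runion_over !big_set1; case: (F i). Qed.

End UnionOverSubfamily.

Lemma List_In_nth (T : Type) (x0 x : T) (s : seq T) :
  List.In x s -> exists i : 'I_(size s), x = nth x0 s i.
Proof.
elim: s => [//|y s IHs] /= [<-|/IHs [i ->]]; first by exists ord0.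
by exists (lift ord0 i).
Qed.

Lemma List_In_map (T : eqType) (U : Type) (f : T -> U) (x : T) (s : seq T) :
  x \in s -> List.In (f x) (map f s).
Proof. by elim: s => [//|y s IHs]; rewrite inE => /orP [/eqP ->|/IHs]; [left|right]. Qed.

Lemma InCompose_runion_over (Cn An : finType) (CT AT : choiceType)
    (subC : CT -> CT -> Prop) (R0 : recipe Cn An CT AT) (Rs : seq (recipe Cn An CT AT))
    (R : recipe Cn An CT AT) :
  InCompose subC Rs R ->
  exists A : {set 'I_(size Rs)}, R = runion_over (fun i : 'I_(size Rs) => nth R0 Rs i) A.
Proof.
elim=> [R' /(List_In_nth R0) [i ->] | R1 R2 _ [A1 ->] _ [A2 ->] _].
  by exists [set i]; rewrite runion_over1.
by exists (A1 :|: A2); rewrite runion_overU.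
Qed.

Theorem mainTheorem4 (Cn An : finType) (CT AT : choiceType)
    (subC : CT -> CT -> Prop) (subA : AT -> AT -> Prop)
    (HC : type_hierarchy subC) (HA : type_hierarchy subA)
    (Rs : seq (recipe Cn An CT AT)) :
  (forall R, List.In R Rs -> is_recipe subC R /\ atomic R) ->
  exists s : seq (recipe Cn An CT AT),
    forall R, InCompose subC Rs R -> List.In R s.
Proof.
move=> _.
pose R0 : recipe Cn An CT AT := Recipe set0 set0 set0 fset0 fset0.
exists [seq runion_over (fun i : 'I_(size Rs) => nth R0 Rs i) A | A : {set 'I_(size Rs)}].
move=> R /(InCompose_runion_over R0) [A ->].
by apply: List_In_map; rewrite mem_enum.
Qed.
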